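(* For all $0<b<B\le1$ and every integer $n\ge1$ there exists an instance $\langle A,f,c\rangle$ with $|A|=n$, $f$ additive, and $p(\{i\})\le b$ for all $i\in A$, such that $$\frac{\textsc{Max-Reward}(B)}{\textsc{Max-Reward}(b)}=\frac{\textsc{Max-Welfare}(B)}{\textsc{Max-Welfare}(b)}=\min\big(\lceil 2B/b\rceil-1,\,n\big).$$
   Context: An instance $\langle A,f,c\rangle$ consists of a finite set $A$ of agents, a monotone nondecreasing $f:2^A\to[0,1]$, and costs $c_i\ge0$. For $S\subseteq A$, $i\in S$: $f_S(i)=f(S)-f(S\setminus\{i\})$; $p(S)=\sum_{i\in S}c_i/f_S(i)$ (conventions: $0$ if $c_i=0=f_S(i)$, $\infty$ if $c_i>0=f_S(i)$). $f$ is additive if $f(S)=\sum_{i\in S}f(\{i\})$. $\textsc{Max-Reward}(B)=\max\{f(S):p(S)\le B\}$ and $\textsc{Max-Welfare}(B)=\max\{f(S)-\sum_{i\in S}c_i:p(S)\le B\}$. *)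

From mathcomp Require Import all_boot all_order all_algebra.
From mathcomp Require Import reals.
Set Implicit Arguments. Unset Strict Implicit. Unset Printing Implicit Defensive.
Import Order.TTheory GRing.Theory Num.Theory.
Local Open Scope ring_scope.

Section Contracts.
Variables (R : realType) (A : finType) (f : {set A} -> R) (c : A -> R).

Definition marg (S : {set A}) (i : A) : R := f S - f (S :\ i).

(* the term c_i / f_S(i), with the conventions 0 if c_i = 0 = f_S(i) and
   +infinity (encoded as None) if c_i > 0 = f_S(i) *)
Definition pterm (S : {set A}) (i : A) : option R :=
  if marg S i == 0 then (if c i == 0 then Some 0 else None)
  else Some (c i / marg S i).

Definition price (S : {set A}) : option R :=
  if [forall i in S, pterm S i != None]
  then Some (\sum_(i in S) odflt 0 (pterm S i))
  else None.

Definition price_le (S : {set A}) (B : R) : bool :=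
  if price S is Some x then x <= B else false.

(* Max-Reward(B) = max { f(S) : p(S) <= B }.  The empty set is always
   feasible (p(empty) = 0 <= B for B >= 0) and f >= 0, so folding max from 0
   gives exactly the maximum. *)
Definition MaxReward (B : R) : R :=
  \big[Num.max/0]_(S : {set A} | price_le S B) f S.

(* Max-Welfare(B) = max { f(S) - sum_{i in S} c_i : p(S) <= B }; again the
   empty set is feasible with value f(empty) >= 0. *)
Definition MaxWelfare (B : R) : R :=
  \big[Num.max/0]_(S : {set A} | price_le S B) (f S - \sum_(i in S) c i).

End Contracts.

Definition valid_instance (R : realType) (A : finType)
  (f : {set A} -> R) (c : A -> R) : Prop :=
  (forall S, 0 <= f S <= 1) /\
  (forall S T : {set A}, S \subset T -> f S <= f T) /\
  (forall i, 0 <= c i).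

Definition additive_val (R : realType) (A : finType) (f : {set A} -> R) : Prop :=
  forall S : {set A}, f S = \sum_(i in S) f [set i].

From mathcomp Require Import all_boot all_order all_algebra.
From mathcomp Require Import reals.
From mathcomp Require Import ring lra.
Import Order.TTheory GRing.Theory Num.Theory.
Set Implicit Arguments. Unset Strict Implicit. Unset Printing Implicit Defensive.
Local Open Scope ring_scope.

(* Take n identical agents, each with reward 1/n and cost t/n.  Every marginal
   contribution is 1/n, so p(S) = |S| t and the feasible sets under a budget
   are exactly those of bounded size; both objectives are then proportional
   to |S|.  With m = ceil(2B/b) - 1 and t = B/m we get t <= b < 2t, so budget
   b affords exactly one agent while budget B affords min(m, n) of them. *)

Lemma bigmax_card_le [R : realType] [n q : nat] [w : R] : 0 <= w -> (q <= n)%N ->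
  \big[Num.max/0]_(S : {set 'I_n} | (#|S| <= q)%N) (#|S|%:R * w) = q%:R * w.
Proof.
move=> w_ge0 le_qn; apply/le_anti/andP; split.
  apply: bigmax_le => [|S le_Sq]; first exact: mulr_ge0.
  by rewrite ler_wpM2r // ler_nat.
pose S0 := [set widen_ord le_qn i | i in 'I_q].
have card_S0 : #|S0| = q.
  by rewrite card_imset ?card_ord // => i j [/val_inj].
rewrite -[in leLHS]card_S0.
by apply: (@le_bigmax_cond _ _ _ 0 S0); rewrite card_S0.
Qed.

Lemma ceil_double_ratio [R : realType] [b B : R] : 0 < b -> b < B ->
  exists (m : nat) (t : R),
    [/\ (Num.ceil (2 * B / b))%:~R - 1 = m%:R :> R, B = m%:R * t, 0 < t, t <= b
      & b < 2 * t].
Proof.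
move=> b_gt0 lt_bB.
have [lt_ceil ceil_le] := andP (ceil_itv (2 * B / b)).
have : 1 < Num.ceil (2 * B / b).
  by rewrite ceil_gt_int ltr_pdivlMr //; lra.
rewrite -subr_gt0; case def_m: (_ - 1) => [m|//] m_gt0.
have ceilE : (Num.ceil (2 * B / b))%:~R = m%:R + 1 :> R.
  by rewrite -(subrK 1 (Num.ceil _)) def_m intrD.
rewrite def_m ltr_pdivlMr // in lt_ceil.
rewrite ceilE ler_pdivrMr // in ceil_le.
have m_pos : (0 : R) < m%:R by rewrite ltr0n.
have m_ge1 : (1 : R) <= m%:R by rewrite ler1n.
exists m, (B / m%:R); split; first by rewrite ceilE addrK.
- by rewrite mulrC divfK ?gt_eqF.
- by rewrite divr_gt0 // (lt_trans b_gt0).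
- by rewrite ler_pdivrMr //; nra.
- by rewrite mulrA ltr_pdivlMr //; lra.
Qed.

Lemma card_le_ord (n : nat) (S : {set 'I_n}) : (#|S| <= n)%N.
Proof. by rewrite -[X in (_ <= X)%N]card_ord max_card. Qed.

Lemma natr_mul_le_single (R : realType) (k : nat) (t x : R) :
  0 < t -> t <= x -> x < 2 * t -> (k%:R * t <= x) = (k <= 1)%N.
Proof.
move=> t_gt0 le_tx lt_x2t; case: leqP => [le_k1 | lt_1k].
  have k_le1 : (k%:R : R) <= 1 by rewrite lern1.
  have k_ge0 : (0 : R) <= k%:R by [].
  by apply/idP; nra.
have k_ge2 : (2 : R) <= k%:R by rewrite (ler_nat R 2).
by apply/negbTE; rewrite -ltNge; nra.
Qed.

Section UniformInstance.
Variables (R : realType) (n : nat) (t : R).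
Hypothesis n_gt0 : (0 < n)%N.

Definition unif_reward (S : {set 'I_n}) : R := #|S|%:R / n%:R.
Definition unif_cost (i : 'I_n) : R := t / n%:R.

Let n_neq0 : (n%:R : R) != 0. Proof. by rewrite pnatr_eq0 -lt0n. Qed.

Lemma unif_reward_additive : additive_val unif_reward.
Proof.
move=> S; rewrite /unif_reward.
under eq_bigr do rewrite cards1.
by rewrite sumr_const -[RHS]mulr_natl mul1r.
Qed.

Lemma unif_valid : 0 <= t -> valid_instance unif_reward unif_cost.
Proof.
have n_pos : (0 : R) < n%:R by rewrite ltr0n.
move=> t_ge0; split; [move=> S | split; [move=> S T le_ST | move=> i]].
- by rewrite divr_ge0 //= ler_pdivrMr // mul1r ler_nat card_le_ord.
- by rewrite ler_wpM2r ?invr_ge0 // ler_nat subset_leq_card.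
- by rewrite divr_ge0.
Qed.

Lemma unif_marg (S : {set 'I_n}) (i : 'I_n) : i \in S ->
  marg unif_reward S i = n%:R^-1.
Proof.
by move=> iS; rewrite /marg /unif_reward (cardsD1 i S) iS natrD /=; field.
Qed.

Lemma unif_price (S : {set 'I_n}) :
  price unif_reward unif_cost S = Some (#|S|%:R * t).
Proof.
have ptermE i : i \in S -> pterm unif_reward unif_cost S i = Some t.
  move=> iS; rewrite /pterm unif_marg // invr_eq0 (negbTE n_neq0).
  by rewrite /unif_cost invrK divfK.
rewrite /price; have -> : [forall i in S, pterm unif_reward unif_cost S i != None].
  by apply/forall_inP => i iS; rewrite ptermE.
rewrite (eq_bigr (fun=> t)) => [|i iS]; last by rewrite ptermE.
by rewrite sumr_const mulr_natl.
Qed.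

Lemma unif_price_le (S : {set 'I_n}) (x : R) :
  price_le unif_reward unif_cost S x = (#|S|%:R * t <= x).
Proof. by rewrite /price_le unif_price. Qed.

Lemma unif_price_set1 (i : 'I_n) (x : R) :
  price_le unif_reward unif_cost [set i] x = (t <= x).
Proof. by rewrite unif_price_le cards1 mul1r. Qed.

Variables (x : R) (q : nat).
Hypotheses (le_qn : (q <= n)%N)
  (price_le_card : forall S : {set 'I_n}, (#|S|%:R * t <= x) = (#|S| <= q)%N).

Lemma unif_MaxReward : MaxReward unif_reward unif_cost x = q%:R / n%:R.
Proof.
rewrite /MaxReward (eq_bigl _ _ (fun S => unif_price_le S x)).
by rewrite (eq_bigl _ _ price_le_card) bigmax_card_le ?invr_ge0.
Qed.

Lemma unif_MaxWelfare : t <= 1 ->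
  MaxWelfare unif_reward unif_cost x = q%:R * ((1 - t) / n%:R).
Proof.
move=> t_le1; have w_ge0 : 0 <= (1 - t) / n%:R by rewrite divr_ge0 ?subr_ge0.
rewrite /MaxWelfare (eq_bigl _ _ (fun S => unif_price_le S x)).
rewrite (eq_bigl _ _ price_le_card) -(bigmax_card_le w_ge0 le_qn).
by apply: eq_bigr => S _; rewrite /unif_reward /unif_cost sumr_const -mulr_natl; field.
Qed.

End UniformInstance.

Theorem mainTheorem13 (R : realType) (b B : R) (n : nat) :
  0 < b -> b < B -> B <= 1 -> (1 <= n)%N ->
  exists (A : finType) (f : {set A} -> R) (c : A -> R),
    [/\ valid_instance f c, #|A| = n, additive_val f,
        (forall i : A, price_le f c [set i] b) &
        let k := Num.min ((Num.ceil (2 * B / b))%:~R - 1) (n%:R : R) in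
        MaxReward f c B / MaxReward f c b = k /\
        MaxWelfare f c B / MaxWelfare f c b = k].
Proof.
move=> b_gt0 lt_bB B_le1 n_gt0.
have [m [t [kE BE t_gt0 le_tb lt_b2t]]] := ceil_double_ratio b_gt0 lt_bB.
have budget_b (S : {set 'I_n}) : (#|S|%:R * t <= b) = (#|S| <= 1)%N.
  exact: natr_mul_le_single.
have budget_B (S : {set 'I_n}) : (#|S|%:R * t <= B) = (#|S| <= minn m n)%N.
  by rewrite BE ler_pM2r // ler_nat leq_min card_le_ord andbT.
have le_mn_n : (minn m n <= n)%N by rewrite geq_minr.
have n_neq0 : (n%:R : R) != 0 by rewrite pnatr_eq0 -lt0n.
have t_lt1 : t < 1 by lra.
exists 'I_n, (unif_reward R (n:=n)), (unif_cost (n:=n) t); split.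
- exact/unif_valid/ltW.
- exact: card_ord.
- exact: unif_reward_additive.
- by move=> i; rewrite unif_price_set1.
- rewrite /= kE -natr_min.
  rewrite !(unif_MaxReward n_gt0 le_mn_n budget_B, unif_MaxReward n_gt0 n_gt0 budget_b).
  rewrite !(unif_MaxWelfare n_gt0 le_mn_n budget_B, unif_MaxWelfare n_gt0 n_gt0 budget_b) ?ltW //.
  by rewrite !mul1r !mulfK ?mulf_neq0 ?invr_neq0 // subr_eq0 gt_eqF.
Qed.
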